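(* Let $n\geqslant 2$ and $N=2^n-1$. There is a bijection between the set of $n$-tuples $(y_1,\dots,y_n)$ of positive integers and the set of reduced $N$-tuples $(z_1,\dots,z_N)$ of positive integers, such that $$\forall j\in\{1,\dots,n\},\quad y_j=\prod_{1\leqslant h\leqslant N}z_h^{\varepsilon_j(h)}\quad\text{and}\quad \mathrm{lcm}(y_1,\dots,y_n)=\prod_{1\leqslant h\leqslant N}z_h.$$
   Context: For $h\in\{1,\dots,N\}$ write $h=\sum_{j=1}^n\varepsilon_j(h)2^{j-1}$ with $\varepsilon_j(h)\in\{0,1\}$. Write $h\preceq\ell$ if $\varepsilon_j(h)\leqslant\varepsilon_j(\ell)$ for all $j$. An $N$-tuple $(z_1,\dots,z_N)$ is reduced if $\gcd(z_h,z_\ell)=1$ whenever $h\not\preceq\ell$ and $\ell\not\preceq h$. *)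

From mathcomp Require Import all_boot.
Set Implicit Arguments. Unset Strict Implicit. Unset Printing Implicit Defensive.

(* eps j h : the j-th binary digit of h, with j 1-based as in the paper:
   eps j h = epsilon_j(h), h = sum_j epsilon_j(h) 2^(j-1). *)
Definition eps (j h : nat) : nat := odd (h %/ 2 ^ j.-1).

Definition bprec (n h l : nat) : Prop :=
  forall j, 1 <= j <= n -> eps j h <= eps j l.

Definition Nn (n : nat) : nat := 2 ^ n - 1.

(* tuples are indexed 0-based: y : 'I_n -> nat with y_j = y (j-1),
   z : 'I_N -> nat with z_h = z (h-1). *)
Definition positive_tuple (m : nat) (x : {ffun 'I_m -> nat}) : Prop :=
  forall i, 0 < x i.

Definition reduced (n : nat) (z : {ffun 'I_(Nn n) -> nat}) : Prop :=
  forall h l : 'I_(Nn n),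
    ~ bprec n h.+1 l.+1 -> ~ bprec n l.+1 h.+1 -> gcdn (z h) (z l) = 1.

From mathcomp Require Import all_boot zify.
Set Implicit Arguments. Unset Strict Implicit. Unset Printing Implicit Defensive.

(* Argue one prime p at a time, with exponents a_j = v_p(y_j).  For
   t < max_j a_j the level set {j | t < a_j} is a nonempty subset of
   {1, ..., n}, i.e. the set of binary digits of some h in {1, ..., N}; take
   v_p(z_h) to be the number of levels t whose level set is h.  Then the
   v_p(z_h) with h containing j add up to a_j and all of them add up to
   max_j a_j, which gives the two product formulas.  Level sets shrink as t
   grows, so the h with v_p(z_h) > 0 form a chain for the bitwise order: z is
   reduced.  Conversely, exponents c_h supported on a chain are recovered from
   the a_j = sum_{h containing j} c_h they produce: every t between the
   largest a_k with k outside h and the smallest a_j with j in h has level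
   set h, so c_h is at most the number of such levels, while the sum of all
   these numbers is max_j a_j <= sum_h c_h. *)

Lemma odd_binary_div n (b : nat -> bool) j :
  odd ((\sum_(i < n) b i * 2 ^ i) %/ 2 ^ j) = (j < n) && b j.
Proof.
elim: n b j => [|n IHn] b j; first by rewrite big_ord0 div0n.
rewrite big_ord_recl expn0 muln1.
have -> : \sum_(i < n) b (bump 0 i) * 2 ^ bump 0 i = (\sum_(i < n) b i.+1 * 2 ^ i) * 2.
  by rewrite big_distrl; apply: eq_bigr => i _; rewrite /bump /= add1n expnS -mulnA (mulnC 2).
case: j => [|j].
  by rewrite divn1 oddD oddM andbF addbF; case: (b 0).
rewrite expnS divnMA addnC divnMDl // (@divn_small (b 0)) ?addn0; last by case: (b 0).
by rewrite (IHn (fun i => b i.+1)).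
Qed.

Lemma binary_lt n (b : nat -> bool) : \sum_(i < n) b i * 2 ^ i < 2 ^ n.
Proof.
elim: n => [|n IHn]; first by rewrite big_ord0.
rewrite big_ord_recr expnS mul2n -addnn -addSn leq_add //.
by case: (b n); rewrite ?mul1n ?mul0n.
Qed.

Lemma binary_digits n x : x < 2 ^ n -> \sum_(i < n) odd (x %/ 2 ^ i) * 2 ^ i = x.
Proof.
elim: n x => [|n IHn] x x_lt; first by rewrite big_ord0; move: x_lt; rewrite expn0; lia.
rewrite big_ord_recl expn0 divn1 muln1 {3}(divn_eq x 2) modn2 addnC; congr (_ + _).
rewrite -(IHn (x %/ 2)) ?ltn_divLR -?expnSr // big_distrl; apply: eq_bigr => i _.
by rewrite /= expnS divnMA -mulnA (mulnC (2 ^ i)).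
Qed.

Section Supports.

Variable n : nat.

Lemma ltn_ord_pow2 (h : 'I_(Nn n)) : h.+1 < 2 ^ n.
Proof. by have := ltn_ord h; have := expn_gt0 2 n; rewrite /Nn; lia. Qed.

Lemma odd_binary_ord_div (b : 'I_n -> bool) (j : 'I_n) :
  odd ((\sum_(i < n) b i * 2 ^ i) %/ 2 ^ j) = b j.
Proof.
rewrite (eq_bigr (fun i : 'I_n => oapp b false (insub (val i)) * 2 ^ i)) => [|i _].
  by rewrite (odd_binary_div _ (fun k => oapp b false (insub k))) ltn_ord valK.
by rewrite valK.
Qed.

Lemma binary_ord_lt (b : 'I_n -> bool) : \sum_(i < n) b i * 2 ^ i < 2 ^ n.
Proof.
rewrite (eq_bigr (fun i : 'I_n => oapp b false (insub (val i)) * 2 ^ i)) => [|i _].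
  exact: (binary_lt _ (fun k => oapp b false (insub k))).
by rewrite valK.
Qed.

Definition supp (h : 'I_(Nn n)) : {set 'I_n} := [set j : 'I_n | odd (h.+1 %/ 2 ^ j)].

Lemma eps_supp (h : 'I_(Nn n)) (j : 'I_n) : eps j.+1 h.+1 = (j \in supp h).
Proof. by rewrite /eps inE. Qed.

Lemma binary_supp (h : 'I_(Nn n)) : \sum_(i < n) (i \in supp h) * 2 ^ i = h.+1.
Proof.
rewrite -[RHS](binary_digits (ltn_ord_pow2 h)).
by apply: eq_bigr => i _; rewrite inE.
Qed.

Lemma supp_inj : injective supp.
Proof.
by move=> h l supp_hl; apply/val_inj/succn_inj; rewrite -!binary_supp supp_hl.
Qed.

Lemma supp_neq0 (h : 'I_(Nn n)) : supp h != set0.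
Proof.
apply: contra_eqN (binary_supp h) => /eqP supp0.
by rewrite supp0 big1 // => i _; rewrite in_set0.
Qed.

Lemma supp_onto (S : {set 'I_n}) : S != set0 -> exists h, supp h = S.
Proof.
case/set0Pn=> j0 j0S; set x := \sum_(i < n) (i \in S) * 2 ^ i.
have x_gt0 : 0 < x.
  by rewrite /x (bigD1 j0) //= j0S mul1n ltn_addr ?expn_gt0.
have x_lt : x.-1 < Nn n by have := binary_ord_lt (fun i => i \in S); rewrite /Nn; lia.
exists (Ordinal x_lt); apply/setP => j.
by rewrite inE /= prednK // odd_binary_ord_div.
Qed.

Lemma bprec_supp (h l : 'I_(Nn n)) : bprec n h.+1 l.+1 <-> supp h \subset supp l.
Proof.
split=> [hl | /subsetP hl].
  apply/subsetP => j; have := hl j.+1; rewrite ltn_ord !eps_supp => /(_ isT).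
  by case: (j \in supp h); case: (j \in supp l).
move=> [|j] // lt_jn; set k : 'I_n := Ordinal lt_jn.
rewrite (eps_supp h k) (eps_supp l k).
by case: (k \in supp h) (hl k) => // ->.
Qed.

Lemma sum_supp_eq (F : {set 'I_n} -> nat) S :
  F set0 = 0 -> \sum_(h < Nn n) (S == supp h) * F (supp h) = F S.
Proof.
have [-> F0 | /supp_onto[h0 <-] _] := eqVneq S set0.
  by rewrite big1 // => h _; rewrite eq_sym (negbTE (supp_neq0 h)).
rewrite (bigD1 h0) //= eqxx mul1n big1 ?addn0 // => h ne_hh0.
by rewrite (inj_eq supp_inj) eq_sym (negbTE ne_hh0).
Qed.

End Supports.

Lemma sum_ltn M k : \sum_(t < M) (t < k) = minn k M.
Proof.
elim: M => [|M IHM]; first by rewrite big_ord0 minn0.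
by rewrite big_ord_recr /= IHM; case: ltnP; lia.
Qed.

Section Levels.

Variables (n : nat) (a : 'I_n -> nat).

Definition level t : {set 'I_n} := [set j | t < a j].

Definition level_count (h : 'I_(Nn n)) : nat :=
  \sum_(t < \max_j a j) (level t == supp h).

Lemma level_neq0 t : (level t != set0) = (t < \max_j a j).
Proof.
apply/set0Pn/idP => [[j] | t_lt].
  by rewrite inE => /leq_trans; apply; apply: leq_bigmax.
case: (pickP (fun j => t < a j)) => [j t_lt_aj | no_j]; first by exists j; rewrite inE.
suff : \max_j a j <= t by lia.
by apply/bigmax_leqP => j _; rewrite leqNgt no_j.
Qed.

Lemma level_sub s t : s <= t -> level t \subset level s.
Proof. by move=> le_st; apply/subsetP => j; rewrite !inE; apply: leq_ltn_trans. Qed.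

Lemma sum_supp_level_count j : \sum_(h < Nn n) (j \in supp h) * level_count h = a j.
Proof.
have sum_t t : \sum_(h < Nn n) (j \in supp h) * (level t == supp h) = (t < a j).
  under eq_bigr do rewrite mulnC.
  by rewrite (@sum_supp_eq _ (fun S => j \in S)) ?inE.
under eq_bigr do rewrite big_distrr.
rewrite exchange_big /=; under eq_bigr do rewrite sum_t.
by rewrite sum_ltn; apply/minn_idPl/leq_bigmax.
Qed.

Lemma sum_level_count : \sum_(h < Nn n) level_count h = \max_j a j.
Proof.
have sum_t t : \sum_(h < Nn n) (level t == supp h) = (t < \max_j a j).
  rewrite -level_neq0 -(@sum_supp_eq _ (fun S => S != set0)) ?eqxx //.
  by apply: eq_bigr => h _; rewrite supp_neq0 muln1.
rewrite /level_count exchange_big /=; under eq_bigr do rewrite sum_t.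
by rewrite sum_ltn minnn.
Qed.

Lemma level_count_gt0 h : 0 < level_count h -> exists t, level t = supp h.
Proof.
rewrite lt0n sum_nat_eq0 => /forallPn[t /=].
by rewrite eqb0 negbK => /eqP; exists t.
Qed.

Lemma level_count_chain h l : 0 < level_count h -> 0 < level_count l ->
  supp h \subset supp l \/ supp l \subset supp h.
Proof.
move=> /level_count_gt0[t <-] /level_count_gt0[s <-].
by case: (leqP t s) => [/level_sub | /ltnW/level_sub]; [right | left].
Qed.

End Levels.

Lemma eq_level_count n (a b : 'I_n -> nat) : a =1 b -> level_count a =1 level_count b.
Proof.
move=> eq_ab h; rewrite /level_count (eq_bigr _ (fun j _ => eq_ab j)).
apply: eq_bigr => t _; congr (nat_of_bool (_ == _)).
by apply/setP => j; rewrite !inE eq_ab.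
Qed.

Section ChainUniqueness.

Variables (n : nat) (c : 'I_(Nn n) -> nat).

Hypothesis c_chain : forall h l, 0 < c h -> 0 < c l ->
  supp h \subset supp l \/ supp l \subset supp h.

Let a (j : 'I_n) := \sum_(l < Nn n) (j \in supp l) * c l.

Lemma leq_supp_sum h j : j \in supp h -> c h <= a j.
Proof. by move=> jh; rewrite /a (bigD1 h) //= jh mul1n leq_addr. Qed.

Lemma chain_gap h j k : 0 < c h -> j \in supp h -> k \notin supp h ->
  c h + a k <= a j.
Proof.
move=> ch_gt0 jh kh; rewrite /a (bigD1 h) //= [X in _ <= X](bigD1 h) //=.
rewrite jh (negbTE kh) mul1n mul0n add0n leq_add2l; apply: leq_sum => l _.
have [-> | cl_gt0] := posnP (c l); first by rewrite !muln0.
case kl: (k \in supp l); last by rewrite mul0n.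
have [/subsetP hl | /subsetP lh] := c_chain ch_gt0 cl_gt0.
  by rewrite hl.
by rewrite (lh _ kl) in kh.
Qed.

Lemma level_count_ge h : c h <= level_count a h.
Proof.
have [-> // | ch_gt0] := posnP (c h).
set lo := \max_(k | k \notin supp h) a k.
have lo_le j : j \in supp h -> lo + c h <= a j.
  move=> jh; rewrite addnC -leq_subRL ?leq_supp_sum //.
  by apply/bigmax_leqP => k kh; rewrite leq_subRL ?leq_supp_sum ?chain_gap.
have [j0 j0h] := set0Pn _ (supp_neq0 h).
have le_max : lo + c h <= \max_j a j := leq_trans (lo_le j0 j0h) (leq_bigmax j0).
have level_eq t : lo <= t < lo + c h -> level a t = supp h.
  case/andP=> lo_t t_lt; apply/setP => j; rewrite inE.
  case jh: (j \in supp h); first exact: leq_trans t_lt (lo_le j jh).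
  by apply/negbTE; rewrite -leqNgt (leq_trans _ lo_t) // leq_bigmax_cond ?jh.
rewrite /level_count -(big_mkord xpredT (fun t => (level a t == supp h) : nat)).
rewrite (big_cat_nat (leq0n _) le_max) (big_cat_nat (leq0n lo) (leq_addr _ _)) /=.
rewrite (@eq_big_nat _ _ _ lo _ _ (fun => 1)) => [|t /level_eq ->]; last by rewrite eqxx.
by rewrite sum_nat_const_nat addKn muln1; lia.
Qed.

Lemma level_count_chain_eq : level_count a =1 c.
Proof.
have le_sum : \sum_h level_count a h <= \sum_h c h.
  rewrite sum_level_count; apply/bigmax_leqP => j _; apply: leq_sum => l _.
  by case: (j \in supp l); rewrite ?mul1n ?mul0n.
have := geq_leqif (leqif_sum (fun h (_ : true) => leqif_eq (level_count_ge h))).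
by rewrite le_sum => /esym/forall_inP eq_c h; apply/esym/eqP/eq_c.
Qed.

End ChainUniqueness.

Lemma eqn_from_prime_logn m k : 0 < m -> 0 < k ->
  (forall p, prime p -> logn p m = logn p k) -> m = k.
Proof.
move=> m_gt0 k_gt0 eq_log; apply: eqn_from_log => // p.
have [/eq_log // | not_pr] := boolP (prime p).
by rewrite [LHS]lognE [RHS]lognE (negbTE not_pr).
Qed.

Lemma logn_prod p (I : Type) (r : seq I) (P : pred I) (F : I -> nat) :
  (forall i, P i -> 0 < F i) ->
  logn p (\prod_(i <- r | P i) F i) = \sum_(i <- r | P i) logn p (F i).
Proof.
move=> F_gt0; suff [] : 0 < \prod_(i <- r | P i) F i /\
  logn p (\prod_(i <- r | P i) F i) = \sum_(i <- r | P i) logn p (F i) by [].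
apply: (big_ind2 (fun m k => 0 < m /\ logn p m = k))
  => [|m1 k1 m2 k2 [m1_gt0 <-] [m2_gt0 <-]|i Pi].
- by rewrite logn1.
- by rewrite muln_gt0 m1_gt0 m2_gt0 lognM.
- by rewrite F_gt0.
Qed.

Lemma logn_biglcm p (I : finType) (F : I -> nat) : (forall i, 0 < F i) ->
  logn p (\big[lcmn/1]_i F i) = \max_i logn p (F i).
Proof.
move=> F_gt0; suff [] : 0 < \big[lcmn/1]_i F i /\
  logn p (\big[lcmn/1]_i F i) = \max_i logn p (F i) by [].
apply: (big_ind2 (fun m k => 0 < m /\ logn p m = k))
  => [|m1 k1 m2 k2 [m1_gt0 <-] [m2_gt0 <-]|i _].
- by rewrite logn1.
- by rewrite lcmn_gt0 m1_gt0 m2_gt0 logn_lcm.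
- by rewrite F_gt0.
Qed.

Lemma logn_prod_primes B (e : nat -> nat) p : prime p ->
  (forall q, prime q -> B <= q -> e q = 0) ->
  logn p (\prod_(q < B | prime q) q ^ e q) = e p.
Proof.
move=> p_pr e_eq0; rewrite logn_prod => [|q q_pr]; last by rewrite expn_gt0 prime_gt0.
under eq_bigr => q q_pr do rewrite lognX logn_prime //.
have [p_lt | le_Bp] := ltnP p B; last first.
  rewrite e_eq0 // big1 // => q _.
  by rewrite gtn_eqF ?muln0 // (leq_trans (ltn_ord q) le_Bp).
rewrite (bigD1 (Ordinal p_lt)) //= eqxx muln1 big1 ?addn0 // => q /andP[_ ne_qp].
by rewrite eq_sym -[val q == p]/(q == Ordinal p_lt) (negbTE ne_qp) muln0.
Qed.

Lemma coprime_lognP m k : 0 < m -> 0 < k ->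
  reflect (forall p, prime p -> minn (logn p m) (logn p k) = 0) (coprime m k).
Proof.
move=> m_gt0 k_gt0; apply: (iffP eqP) => [gcd1 p _ | min0].
  by rewrite -logn_gcd // gcd1 logn1.
apply: eqn_from_prime_logn => [||p p_pr]; rewrite ?gcdn_gt0 ?m_gt0 //.
by rewrite logn_gcd // min0 // logn1.
Qed.

Definition reduce n (y : {ffun 'I_n -> nat}) : {ffun 'I_(Nn n) -> nat} :=
  [ffun h => \prod_(p < (\max_j y j).+1 | prime p)
               p ^ level_count (fun j => logn p (y j)) h].

Section Reduce.

Variable n : nat.
Implicit Types (y : {ffun 'I_n -> nat}) (z : {ffun 'I_(Nn n) -> nat}).

Lemma reduce_gt0 y h : 0 < reduce y h.
Proof. by rewrite ffunE prodn_cond_gt0 // => p p_pr; rewrite expn_gt0 prime_gt0. Qed.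

Lemma logn_reduce y h p : prime p ->
  logn p (reduce y h) = level_count (fun j => logn p (y j)) h.
Proof.
move=> p_pr; rewrite ffunE.
rewrite (logn_prod_primes (e := fun q => level_count (fun j => logn q (y j)) h)) //.
move=> q _ max_lt_q.
rewrite /level_count (_ : \max_j _ = 0) ?big_ord0 //.
apply/eqP; rewrite -leqn0; apply/bigmax_leqP => j _.
by rewrite ltn_log0 // (leq_ltn_trans (leq_bigmax j)).
Qed.

Lemma prod_reduce_supp y (j : 'I_n) : positive_tuple y ->
  \prod_(h < Nn n) reduce y h ^ eps j.+1 h.+1 = y j.
Proof.
move=> y_gt0; apply: eqn_from_prime_logn => [||p p_pr]; rewrite ?y_gt0 //.
  by apply: prodn_gt0 => h; rewrite expn_gt0 reduce_gt0.
rewrite logn_prod => [|h _]; last by rewrite expn_gt0 reduce_gt0.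
under eq_bigr do rewrite lognX logn_reduce // eps_supp.
exact: sum_supp_level_count.
Qed.

Lemma biglcm_reduce y : positive_tuple y ->
  \big[lcmn/1]_j y j = \prod_(h < Nn n) reduce y h.
Proof.
move=> y_gt0; apply: eqn_from_prime_logn => [||p p_pr].
- by apply: (big_ind (fun m => 0 < m)) => // m k; rewrite lcmn_gt0 => -> ->.
- by apply: prodn_gt0 => h; apply: reduce_gt0.
rewrite logn_biglcm // logn_prod => [|h _]; last exact: reduce_gt0.
by rewrite -sum_level_count; apply: eq_bigr => h _; rewrite logn_reduce.
Qed.

Lemma reduce_reduced y : reduced (reduce y).
Proof.
move=> h l not_hl not_lh; apply/eqP/coprime_lognP; rewrite ?reduce_gt0 // => p p_pr.
rewrite !logn_reduce //; set a := fun j => logn p (y j).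
have [-> | h_gt0] := posnP (level_count a h); first by rewrite min0n.
have [-> | l_gt0] := posnP (level_count a l); first by rewrite minn0.
by case: (level_count_chain h_gt0 l_gt0) => /bprec_supp.
Qed.

Lemma reduced_logn_chain z p : positive_tuple z -> reduced z -> prime p ->
  forall h l, 0 < logn p (z h) -> 0 < logn p (z l) ->
  supp h \subset supp l \/ supp l \subset supp h.
Proof.
move=> z_gt0 z_red p_pr h l h_gt0 l_gt0.
have [hl | not_hl] := boolP (supp h \subset supp l); first by left.
have [lh | not_lh] := boolP (supp l \subset supp h); first by right.
have coprime_hl : coprime (z h) (z l).
  by apply/eqP/z_red => /bprec_supp; apply/negP.
have /(coprime_lognP (z_gt0 h) (z_gt0 l)) min0 := coprime_hl.
by have := min0 p p_pr; lia.
Qed.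

Lemma reduce_onto z : positive_tuple z -> reduced z ->
  reduce [ffun j : 'I_n => \prod_(h < Nn n) z h ^ eps j.+1 h.+1] = z.
Proof.
move=> z_gt0 z_red; apply/ffunP => h.
apply: eqn_from_prime_logn => [||p p_pr]; rewrite ?reduce_gt0 ?z_gt0 //.
rewrite logn_reduce // -(level_count_chain_eq (reduced_logn_chain z_gt0 z_red p_pr)).
apply: eq_level_count => j.
rewrite ffunE logn_prod => [|l _]; last by rewrite expn_gt0 z_gt0.
by apply: eq_bigr => l _; rewrite lognX eps_supp.
Qed.

End Reduce.

Unset Implicit Arguments.

Theorem mainTheorem2 (n : nat) (hn : 2 <= n) :
  exists f : {ffun 'I_n -> nat} -> {ffun 'I_(Nn n) -> nat},
    (forall y, positive_tuple y -> positive_tuple (f y) /\ reduced (f y)) /\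
    (forall y1 y2, positive_tuple y1 -> positive_tuple y2 -> f y1 = f y2 -> y1 = y2) /\
    (forall z, positive_tuple z -> reduced z ->
       exists y, positive_tuple y /\ f y = z) /\
    (forall y, positive_tuple y ->
       (forall j : 'I_n, y j = \prod_(h < Nn n) (f y h) ^ eps j.+1 h.+1) /\
       \big[lcmn/1]_(j < n) y j = \prod_(h < Nn n) f y h).
Proof.
(* The construction works for every [n]. *)
exists (@reduce n); split; [|split; [|split]].
- by move=> y _; split; [move=> h; apply: reduce_gt0 | apply: reduce_reduced].
- move=> y1 y2 y1_gt0 y2_gt0 eq_reduce; apply/ffunP => j.
  by rewrite -(prod_reduce_supp j y1_gt0) -(prod_reduce_supp j y2_gt0) eq_reduce.
- move=> z z_gt0 z_red; exists [ffun j : 'I_n => \prod_(h < Nn n) z h ^ eps j.+1 h.+1].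
  split; last exact: reduce_onto.
  by move=> j; rewrite ffunE prodn_gt0 // => h; rewrite expn_gt0 z_gt0.
- by move=> y y_gt0; split; [move=> j; rewrite prod_reduce_supp | rewrite biglcm_reduce].
Qed.
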